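(* Let $\mathcal A,\mathcal B\subseteq\mathcal M_n(\mathbb C)$ be unital $*$-subalgebras with equivalent spectral lists, and let $S\in\mathcal M_n(\mathbb C)$. Then $$\mathcal U_n(\mathcal E_{\mathcal A}(\mathcal U_n(S)))=\mathcal U_n(\mathcal E_{\mathcal B}(\mathcal U_n(S)))\quad\text{and}\quad \mathcal U_n(\mathcal E_{\mathcal A}(\mathcal C_n(S)))=\mathcal U_n(\mathcal E_{\mathcal B}(\mathcal C_n(S))).$$
   Context: Every unital $*$-subalgebra $\mathcal A\subseteq\mathcal M_n(\mathbb C)$ is unitarily conjugate to one of the form $\bigoplus_{i=1}^m\mathcal M_{d(i)}(\mathbb C)\otimes1_{c(i)}$ with $\sum_i d(i)c(i)=n$ (where $\mathcal M_d(\mathbb C)\otimes 1_c$ is the set of block diagonal matrices with $c$ equal diagonal blocks in $\mathcal M_d(\mathbb C)$); the list $(d(i),c(i))_{i=1}^m$ is its spectral list, determined up to equivalence, where two lists $(d(i),c(i))_{i=1}^m$, $(d'(i),c'(i))_{i=1}^r$ are equivalent if $m=r$ and they differ by a permutation of indices. $\mathcal E_{\mathcal A}$ is the trace preserving conditional expectation onto $\mathcal A$, i.e. the orthogonal projection onto $\mathcal A$ with respect to $\langle X,Y\rangle=\mathrm{tr}(Y^*X)$. For $\mathcal X\subseteq\mathcal M_n(\mathbb C)$: $\mathcal U_n(\mathcal X)=\{U^*XU:X\in\mathcal X,U\text{ unitary}\}$, $\mathcal C_n(S)=\{V^*SV:\|V\|\le1\}$, $\mathcal E_{\mathcal A}(\mathcal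 X)=\{\mathcal E_{\mathcal A}(x):x\in\mathcal X\}$. *)

From mathcomp Require Import all_boot all_order all_algebra complex.
From mathcomp Require Import reals.
Set Implicit Arguments. Unset Strict Implicit. Unset Printing Implicit Defensive.
Import GRing.Theory Num.Theory.
Local Open Scope ring_scope.
Local Open Scope complex_scope.

Section MatrixSets.
Variable R : realType.
Local Notation C := R[i].

Definition adj (m k : nat) (M : 'M[C]_(m, k)) : 'M[C]_(k, m) :=
  (map_mx (@conjc R) M)^T.

Variable n : nat.

Definition unitary (U : 'M[C]_n) : Prop :=
  U *m adj U = 1%:M /\ adj U *m U = 1%:M.

Definition star_subalg (A : 'M[C]_n -> Prop) : Prop :=
  [/\ A 1%:M,
      (forall x y, A x -> A y -> A (x + y)),
      (forall (c : C) x, A x -> A (c *: x)),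
      (forall x y, A x -> A y -> A (x *m y)) &
      (forall x, A x -> A (adj x))].

(* For a list s = [:: (d 0, c 0); ...; (d (m-1), c (m-1))], the k-th basis
   index of C^n (n = sum d(i) c(i)) is labelled by the triple (i, j, r):
   block i, copy j < c i, row r < d i, enumerated in the order of the
   block-diagonal decomposition  (+)_i M_{d(i)} (x) 1_{c(i)}. *)
Definition blk_labels (s : seq (nat * nat)) : seq (nat * nat * nat) :=
  flatten [seq flatten [seq [seq (i, j, r) | r <- iota 0 (nth (0, 0) s i).1]
                           | j <- iota 0 (nth (0, 0) s i).2]
          | i <- iota 0 (size s)].

(* M belongs to (+)_i M_{d(i)}(C) (x) 1_{c(i)}: block diagonal, the c(i)
   diagonal copies of block i all equal to the same X_i in M_{d(i)}(C). *)
Definition block_alg (s : seq (nat * nat)) (M : 'M[C]_n) : Prop :=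
  exists X : nat -> nat -> nat -> C,
    forall k l : 'I_n,
      let a := nth (0, 0, 0) (blk_labels s) k in
      let b := nth (0, 0, 0) (blk_labels s) l in
      M k l = if (a.1.1 == b.1.1) && (a.1.2 == b.1.2) then X a.1.1 a.2 b.2
              else 0.

Definition spectral_list (A : 'M[C]_n -> Prop) (s : seq (nat * nat)) : Prop :=
  [/\ all (fun p => (0 < p.1)%N && (0 < p.2)%N) s,
      (\sum_(p <- s) p.1 * p.2)%N = n &
      exists U, unitary U /\
        forall M, A M <-> exists X, block_alg s X /\ M = adj U *m X *m U].

Definition equiv_lists (s t : seq (nat * nat)) : Prop := perm_eq s t.

(* Y = E_A(x): the orthogonal projection of x onto A for <X,Y> = tr(Y^* X) *)
Definition cond_exp (A : 'M[C]_n -> Prop) (x y : 'M[C]_n) : Prop :=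
  A y /\ forall a, A a -> \tr (adj a *m (x - y)) = 0.

Definition EA (A : 'M[C]_n -> Prop) (X : 'M[C]_n -> Prop) : 'M[C]_n -> Prop :=
  fun y => exists2 x, X x & cond_exp A x y.

Definition Un (X : 'M[C]_n -> Prop) : 'M[C]_n -> Prop :=
  fun Y => exists x U, [/\ X x, unitary U & Y = adj U *m x *m U].

(* ||V|| <= 1 (operator norm): ||V v||^2 <= ||v||^2 for all v *)
Definition contraction (V : 'M[C]_n) : Prop :=
  forall v : 'cV[C]_n,
    (adj (V *m v) *m (V *m v)) 0 0 <= (adj v *m v) 0 0.

Definition Cn (S : 'M[C]_n) : 'M[C]_n -> Prop :=
  fun Y => exists2 V, contraction V & Y = adj V *m S *m V.

End MatrixSets.

From mathcomp Require Import all_boot all_order all_algebra complex.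
From mathcomp Require Import reals fingroup perm.
Set Implicit Arguments. Unset Strict Implicit. Unset Printing Implicit Defensive.
Import Order.TTheory GRing.Theory.

(* Algebras with equivalent spectral lists are unitarily conjugate: matching
   the block labels of one list with those of the other is a permutation of
   the standard basis, which carries one block-diagonal model onto the other.
   If B = W^{*} A W with W unitary, then E_B(x) = W^{*} E_A(W x W^{*}) W as the
   trace inner product is invariant under unitary conjugation. Since U_n(S)
   and C_n(S) are themselves invariant under unitary conjugation, the outer
   U_n absorbs W. *)

Lemma size_blk_labels s : size (blk_labels s) = (\sum_(p <- s) p.1 * p.2)%N.
Proof.
rewrite /blk_labels size_flatten sumnE !big_map (big_nth (0, 0)) /index_iota subn0.
apply: eq_bigr => i _; rewrite size_flatten sumnE !big_map.
under eq_bigr do rewrite size_map size_iota.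
by rewrite big_const_seq count_predT size_iota iter_addn_0.
Qed.

Lemma uniq_flatten_map_key (T K : eqType) (key : T -> K) (F : K -> seq T) ks :
  uniq ks -> (forall k, uniq (F k)) -> (forall k x, x \in F k -> key x = k) ->
  uniq (flatten (map F ks)).
Proof.
move=> + uniqF keyF; elim: ks => [|k ks IH] //= /andP[kNks uniq_ks].
rewrite cat_uniq uniqF IH // andbT; apply/hasPn => x /flattenP[_ /mapP[k' k'ks ->]] xFk'.
by apply/negP => xFk; move: kNks; rewrite -(keyF _ _ xFk) (keyF _ _ xFk') k'ks.
Qed.

Lemma uniq_blk_labels s : uniq (blk_labels s).
Proof.
rewrite /blk_labels.
apply: (@uniq_flatten_map_key _ nat (fun a : nat * nat * nat => a.1.1)) => [||i a].
- exact: iota_uniq.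
- move=> i; apply: (@uniq_flatten_map_key _ nat (fun a : nat * nat * nat => a.1.2)) => [||j a].
  + exact: iota_uniq.
  + by move=> j; rewrite map_inj_uniq ?iota_uniq // => r r' [].
  + by case/mapP=> r _ ->.
- by case/flattenP=> _ /mapP[j _ ->] /mapP[r _ ->].
Qed.

Lemma mem_blk_labels s i j r : ((i, j, r) \in blk_labels s) =
  [&& i < size s, j < (nth (0, 0) s i).2 & r < (nth (0, 0) s i).1].
Proof.
apply/flattenP/and3P => [[_ /mapP[i' lti' ->] /flattenP[_ /mapP[j' ltj' ->]]]|[ltis ltj ltr]].
  by case/mapP=> r' ltr' [-> -> ->]; move: lti' ltj' ltr'; rewrite !mem_iota.
exists (flatten [seq [seq (i, j', r') | r' <- iota 0 (nth (0, 0) s i).1]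
                | j' <- iota 0 (nth (0, 0) s i).2]).
  by apply/mapP; exists i; rewrite ?mem_iota.
apply/flattenP; exists [seq (i, j, r') | r' <- iota 0 (nth (0, 0) s i).1].
  by apply/mapP; exists j; rewrite ?mem_iota.
by apply/mapP; exists r; rewrite ?mem_iota.
Qed.

Lemma perm_eq_reindex (T : eqType) (x0 : T) (s t : seq T) : perm_eq t s ->
  exists sig h : nat -> nat,
    (forall i, i < size t -> h (sig i) = i) /\
    (forall i, i < size t -> sig i < size s /\ nth x0 t i = nth x0 s (sig i)).
Proof.
case/(perm_iotaP x0) => Is permIs ->; exists (nth 0 Is), (index^~ Is).
rewrite size_map; split=> i ltiIs; first by rewrite index_uniq // (perm_uniq permIs) iota_uniq.
split; last exact: nth_map.
by have := mem_nth 0 ltiIs; rewrite (perm_mem permIs) mem_iota.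
Qed.

Definition relabel_block (sig : nat -> nat) (a : nat * nat * nat) :=
  (sig a.1.1, a.1.2, a.2).

Lemma blk_labels_reindex n s t (sig h : nat -> nat) :
  (\sum_(p <- s) p.1 * p.2)%N = n -> (\sum_(p <- t) p.1 * p.2)%N = n ->
  (forall i, i < size t -> h (sig i) = i) ->
  (forall i, i < size t -> sig i < size s /\ nth (0, 0) t i = nth (0, 0) s (sig i)) ->
  exists g : 'S_n, forall k : 'I_n,
    nth (0, 0, 0) (blk_labels s) (g k) = relabel_block sig (nth (0, 0, 0) (blk_labels t) k).
Proof.
move=> sum_s sum_t h_sig reindex.
have relabel_mem a : a \in blk_labels t -> relabel_block sig a \in blk_labels s.
  case: a => [[i j] r]; rewrite !mem_blk_labels /= => /and3P[lti ltj ltr].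
  by have [-> eq_i] := reindex i lti; rewrite -eq_i ltj ltr.
have relabel_inj : {in blk_labels t &, injective (relabel_block sig)}.
  move=> [[i j] r] [[i' j'] r']; rewrite !mem_blk_labels => /and3P[lti _ _] /and3P[lti' _ _].
  by case=> eq_sig -> ->; rewrite -(h_sig i) // -(h_sig i') // eq_sig.
pose lab (k : 'I_n) := nth (0, 0, 0) (blk_labels t) k.
have lab_mem k : lab k \in blk_labels t by rewrite mem_nth ?size_blk_labels ?sum_t.
have index_lt k : index (relabel_block sig (lab k)) (blk_labels s) < n.
  by rewrite -sum_s -size_blk_labels index_mem relabel_mem.
have index_inj : injective (fun k => Ordinal (index_lt k)).
  move=> k k' /(congr1 (nth (0, 0, 0) (blk_labels s) \o val)) /=.
  rewrite !nth_index ?relabel_mem // => /(relabel_inj _ _ (lab_mem k) (lab_mem k')) /eqP.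
  by rewrite nth_uniq ?uniq_blk_labels ?size_blk_labels ?sum_t // => /eqP /val_inj.
by exists (perm index_inj) => k; rewrite permE nth_index ?relabel_mem.
Qed.

Lemma blk_labels_block_lt s k : k < size (blk_labels s) ->
  (nth (0, 0, 0) (blk_labels s) k).1.1 < size s.
Proof.
by move/(mem_nth (0, 0, 0)); case: nth => [[i j] r]; rewrite mem_blk_labels => /and3P[].
Qed.

Section BlockRelabel.
Variables (R : realType) (n : nat) (s t : seq (nat * nat)) (sig h : nat -> nat) (g : 'S_n).
Hypothesis sum_t : (\sum_(p <- t) p.1 * p.2)%N = n.
Hypothesis h_sig : forall i, i < size t -> h (sig i) = i.
Hypothesis g_relabel : forall k : 'I_n,
  nth (0, 0, 0) (blk_labels s) (g k) = relabel_block sig (nth (0, 0, 0) (blk_labels t) k).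

Let block_lt (k : 'I_n) : (nth (0, 0, 0) (blk_labels t) k).1.1 < size t.
Proof. by rewrite blk_labels_block_lt ?size_blk_labels ?sum_t. Qed.

Let sig_eq i j : i < size t -> j < size t -> (sig i == sig j) = (i == j).
Proof. by move=> lti ltj; apply/eqP/eqP => [/(congr1 h)|->]; rewrite ?h_sig. Qed.

Lemma block_alg_relabel (M N : 'M[R[i]]_n) :
  (forall k l, M k l = N (g k) (g l)) -> block_alg t M <-> block_alg s N.
Proof.
move=> MN; split=> [[X hX]|[X hX]].
- exists (fun b => X (h b)) => k l /=.
  by rewrite -(permKV g k) -(permKV g l) -MN hX !g_relabel /= sig_eq ?block_lt ?h_sig.
- by exists (fun i => X (sig i)) => k l /=; rewrite MN hX !g_relabel /= sig_eq ?block_lt.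
Qed.

End BlockRelabel.

Local Open Scope ring_scope.

Section UnitaryConjugation.
Variable R : realType.
Local Notation C := R[i].

Lemma adjM m k p (M : 'M[C]_(m, k)) (N : 'M[C]_(k, p)) : adj (M *m N) = adj N *m adj M.
Proof. by rewrite /adj map_mxM trmx_mul. Qed.

Lemma adjK m k (M : 'M[C]_(m, k)) : adj (adj M) = M.
Proof. by rewrite /adj map_trmx trmxK -map_mx_comp map_mx_id // => z /=; apply: conjcK. Qed.

Lemma adj_perm_mx k (g : 'S_k) : adj (perm_mx g : 'M[C]_k) = perm_mx g^-1.
Proof. by rewrite /adj map_perm_mx tr_perm_mx. Qed.

Variable n : nat.
Implicit Types (M U W : 'M[C]_n) (X : 'M[C]_n -> Prop).

Lemma unitaryM U W : unitary U -> unitary W -> unitary (U *m W).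
Proof.
move=> [U1 U2] [W1 W2]; split; rewrite adjM mulmxA.
  by rewrite -(mulmxA U) W1 mulmx1 U1.
by rewrite -(mulmxA (adj W)) U2 mulmx1 W2.
Qed.

Lemma unitary_adj U : unitary U -> unitary (adj U).
Proof. by move=> [U1 U2]; split; rewrite adjK. Qed.

Lemma unitary_perm_mx (g : 'S_n) : unitary (perm_mx g : 'M[C]_n).
Proof. by split; rewrite adj_perm_mx -perm_mxM ?mulVg ?mulgV perm_mx1. Qed.

Lemma unitary_conjK U M : unitary U -> adj U *m (U *m M *m adj U) *m U = M.
Proof. by case=> U1 U2; rewrite !mulmxA U2 mul1mx -mulmxA U2 mulmx1. Qed.

Lemma unitary_conjVK U M : unitary U -> U *m (adj U *m M *m U) *m adj U = M.
Proof. by move/unitary_adj/(unitary_conjK M); rewrite adjK. Qed.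

Lemma exists_unitary_conjE U M (P : 'M[C]_n -> Prop) : unitary U ->
  (exists N, P N /\ M = adj U *m N *m U) <-> P (U *m M *m adj U).
Proof.
move=> hU; split=> [[N [PN ->]]|PM]; first by rewrite unitary_conjVK.
by exists (U *m M *m adj U); rewrite unitary_conjK.
Qed.

Lemma perm_mx_conjE (g : 'S_n) M k l :
  (adj (perm_mx g) *m M *m perm_mx g) (g k) (g l) = M k l.
Proof.
rewrite adj_perm_mx -mulmxA; have := col_permE g^-1 M; rewrite invgK => <-.
by rewrite -row_permE !mxE !permK.
Qed.

Lemma spectral_lists_conj A B s t : spectral_list A s -> spectral_list B t ->
  perm_eq s t -> exists W, unitary W /\ forall M, B M <-> A (W *m M *m adj W).
Proof.
move=> [_ sum_s [UA [hUA hA]]] [_ sum_t [UB [hUB hB]]] perm_st.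
have perm_ts : perm_eq t s by rewrite perm_sym.
have [sig [h [h_sig reindex]]] := perm_eq_reindex (0, 0) perm_ts.
have [g g_relabel] := blk_labels_reindex sum_s sum_t h_sig reindex.
pose P : 'M[C]_n := perm_mx g.
exists (adj UA *m adj P *m UB); split.
  exact: unitaryM (unitaryM (unitary_adj hUA) (unitary_adj (unitary_perm_mx g))) hUB.
move=> M; rewrite hB hA !exists_unitary_conjE //.
have [UA1 _] := hUA.
rewrite (_ : UA *m _ *m adj UA = adj P *m (UB *m M *m adj UB) *m P).
  by apply: (block_alg_relabel sum_t h_sig g_relabel) => k l; rewrite perm_mx_conjE.
by rewrite !adjM !adjK !mulmxA UA1 mul1mx -mulmxA UA1 mulmx1.
Qed.

Definition unitarily_invariant X :=
  forall M U, X M -> unitary U -> X (adj U *m M *m U).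

Lemma Un_unitarily_invariant X : unitarily_invariant (Un X).
Proof.
move=> _ U [M [W [XM hW ->]]] hU; exists M, (W *m U); split=> //.
  exact: unitaryM.
by rewrite adjM !mulmxA.
Qed.

Lemma Cn_unitarily_invariant S : unitarily_invariant (Cn S).
Proof.
move=> _ U [V contrV ->] [_ U2]; exists (V *m U); last by rewrite adjM !mulmxA.
move=> v; rewrite -mulmxA; apply: le_trans (contrV (U *m v)) _.
by rewrite adjM mulmxA -(mulmxA _ (adj U)) U2 mulmx1.
Qed.

Section ConjugateAlgebras.
Variables (A B : 'M[C]_n -> Prop) (W : 'M[C]_n).
Hypotheses (hW : unitary W) (BA : forall M, B M <-> A (W *m M *m adj W)).

Lemma cond_exp_conj x y :
  cond_exp B x y -> cond_exp A (W *m x *m adj W) (W *m y *m adj W).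
Proof.
move=> [By orth]; split=> [|a Aa]; first by rewrite -BA.
have Ba : B (adj W *m a *m W) by rewrite BA unitary_conjVK.
rewrite -mulmxBl -mulmxBr -(orth _ Ba) !adjM adjK !mulmxA.
by rewrite mxtrace_mulC !mulmxA.
Qed.

Lemma Un_EA_conj_sub X Y : unitarily_invariant X -> Un (EA B X) Y -> Un (EA A X) Y.
Proof.
move=> invX [y [U [[x Xx cexp_xy] hU ->]]].
exists (W *m y *m adj W), (W *m U); split; last 2 first.
- exact: unitaryM.
- by case: hW => _ W2; rewrite adjM !mulmxA -!(mulmxA _ (adj W) W) W2 !mulmx1.
exists (W *m x *m adj W); last exact: cond_exp_conj.
by have := invX x (adj W) Xx (unitary_adj hW); rewrite adjK.
Qed.

End ConjugateAlgebras.

Lemma Un_EA_conj A B W X : unitary W -> (forall M, B M <-> A (W *m M *m adj W)) ->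
  unitarily_invariant X -> forall Y, Un (EA A X) Y <-> Un (EA B X) Y.
Proof.
move=> hW BA invX Y; split; last exact: (Un_EA_conj_sub hW BA invX).
apply: (Un_EA_conj_sub (unitary_adj hW)) invX => M.
by rewrite adjK BA unitary_conjVK.
Qed.

End UnitaryConjugation.

Theorem lemma3p7 (R : realType) (n : nat) (A B : 'M[R[i]]_n -> Prop)
    (sA sB : seq (nat * nat)) :
  star_subalg A -> star_subalg B ->
  spectral_list A sA -> spectral_list B sB -> equiv_lists sA sB ->
  forall S : 'M[R[i]]_n,
    (forall Y, Un (EA A (Un (fun X => X = S))) Y <->
               Un (EA B (Un (fun X => X = S))) Y) /\
    (forall Y, Un (EA A (Cn S)) Y <-> Un (EA B (Cn S)) Y).
Proof.
(* The spectral lists determine A and B. *)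
move=> _ _ specA specB perm_AB S.
have [W [hW BA]] := spectral_lists_conj specA specB perm_AB.
split; apply: Un_EA_conj hW BA _.
- exact: Un_unitarily_invariant.
- exact: Cn_unitarily_invariant.
Qed.
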